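(* Let $P$ be a finite graded poset with $\hat0,\hat1$. (1) If $x,y\in P-\{\hat0,\hat1\}$ with $x$ covering $y$, and $x',y'$ denote the new elements of $\mathcal U(P;x,y)$, then $\mathcal Z(\mathcal U(P;x,y);x',y',y)=P$. (2) If $x,y,z\in P-\{\hat0,\hat1\}$ satisfy the zipping hypotheses, then $\mathcal O(\mathcal Z(P;x,y,z))$ is obtained from $\mathcal O(P)$ by first contracting $y$ to $x$ and then contracting $x$ to $z$. (3) If $x$ covers $y$, then $\mathcal O(\mathcal U(P;x,y))$ is obtained from $\mathcal O(P)$ by first performing the edge subdivision of $\{x,y\}$ with new vertex $x'$, and then the edge subdivision of $\{x,x'\}$ with new vertex $y'$.
   Context: $\mathcal O(P)$ denotes the simplicial complex of chains of $P-\{\hat0,\hat1\}$; $r$ is the rank function. Zipping: let $x,y,z\in P-\{\hat0,\hat1\}$ be such that (i) $x$ covers exactly $y$ and $z$, (ii) $x$ is the unique minimal upper bound of $y$ and $z$, (iii) $y$ and $z$ cover exactly the same elements; $\mathcal Z(P;x,y,z)$ is the poset obtained from $P$ by deleting $x,y$ and adding the relations $w>z$ for all relations $w>y$. Unzipping: for $x,y\in P-\{\hat0,\hat1\}$ with $x$ covering $y$, $\mathcal U(P;x,y)$ is the graded poset obtained by deleting the cover relation $y<x$, adding new elements $x',y'$ with $r(x')=r(x)$, $r(y')=r(y)$, and adding the cover relations $x'<w$ for every cover $x<w$, $w<y'$ for every cover $w<y$, and $y'<x'$, $y<x'$, $y'<x$. For a simplicial complex $\Delta$ with edge $\{i,j\}$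 and $\mathrm{lk}_\Delta(F)=\{G: G\cap F=\emptyset, G\cup F\in\Delta\}$: the edge subdivision of $\{i,j\}$ by a new vertex $v$ is $\{F\in\Delta:F\not\supseteq\{i,j\}\}\cup\{F\cup\{v\},F\cup\{i,v\},F\cup\{j,v\}:F\in\mathrm{lk}_\Delta(\{i,j\})\}$; the edge contraction of $i$ to $j$ is $\{F\in\Delta:i\notin F\}\cup\{(F\setminus\{i\})\cup\{j\}: i\in F\in\Delta\}$. *)

From mathcomp Require Import all_boot.
Set Implicit Arguments. Unset Strict Implicit. Unset Printing Implicit Defensive.

(* A finite poset is given by a carrier C : {set T} inside an ambient finite
   type T (which may contain further, unused elements, so that new elements
   can be adjoined) together with a strict order relation lt (only its
   restriction to C matters). *)
Section PosetDefs.
Variable T : finType.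

Definition covers (C : {set T}) (lt : rel T) (a b : T) : bool :=
  [&& a \in C, b \in C, lt a b & [forall c in C, ~~ (lt a c && lt c b)]].

Definition tclos (R : rel T) : rel T :=
  fun a b => [exists c, R a c && connect R c b].

Definition graded_poset (C : {set T}) (lt : rel T) (bot top : T) (r : T -> nat) : Prop :=
  [/\ (forall a, a \in C -> ~~ lt a a),
      (forall a b c, a \in C -> b \in C -> c \in C -> lt a b -> lt b c -> lt a c),
      (bot \in C /\ top \in C),
      (forall a, a \in C -> a != bot -> lt bot a) /\ (forall a, a \in C -> a != top -> lt a top) &
      r bot = 0 /\
      forall a b, covers C lt a b -> r b = (r a).+1].

Definition same_poset (C1 : {set T}) (lt1 : rel T) (C2 : {set T}) (lt2 : rel T) : Prop :=
  C1 = C2 /\ forall a b, a \in C1 -> b \in C1 -> lt1 a b = lt2 a b.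

Definition zippable (C : {set T}) (lt : rel T) (bot top x y z : T) : Prop :=
  let ub u := [&& u \in C, lt y u & lt z u] in
  let minub u := ub u && [forall v, ub v ==> ~~ lt v u] in
  [/\ [/\ x \in C, y \in C & z \in C],
      [/\ x \notin [set bot; top], y \notin [set bot; top] & z \notin [set bot; top]],
      (y != z /\ (forall w, covers C lt w x = (w == y) || (w == z))),
      (minub x /\ (forall u, minub u -> u = x)) &
      forall w, covers C lt w y = covers C lt w z].

Definition zip_carrier (C : {set T}) (x y : T) : {set T} := C :\ x :\ y.
Definition zip_lt (C : {set T}) (lt : rel T) (x y z : T) : rel T :=
  tclos (fun a b => [&& a \in zip_carrier C x y, b \in zip_carrier C x y &
                        lt a b || ((a == z) && lt y b)]).

(* U(P;x,y), with new elements x' y' (given by the user, fresh) *)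
Definition unzip_carrier (C : {set T}) (x' y' : T) : {set T} := x' |: (y' |: C).
Definition unzip_cov (C : {set T}) (lt : rel T) (x y x' y' : T) : rel T :=
  fun a b =>
  [|| covers C lt a b && ~~ ((a == y) && (b == x)),
      (a == x') && covers C lt x b,
      covers C lt a y && (b == y'),
      (a == y') && (b == x'),
      (a == y) && (b == x') |
      (a == y') && (b == x)].
Definition unzip_lt (C : {set T}) (lt : rel T) (x y x' y' : T) : rel T :=
  tclos (unzip_cov C lt x y x' y').

(* order complex O(P): chains of P - {0^,1^} (including the empty face) *)
Definition order_complex (C : {set T}) (lt : rel T) (bot top : T) : {set {set T}} :=
  [set A : {set T} | (A \subset C :\ bot :\ top) &&
     [forall a in A, forall b in A, [|| a == b, lt a b | lt b a]]].

Definition link (D : {set {set T}}) (F : {set T}) : {set {set T}} :=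
  [set G : {set T} | [disjoint G & F] && ((G :|: F) \in D)].

Definition edge_subdivision (D : {set {set T}}) (i j v : T) : {set {set T}} :=
  let L := link D [set i; j] in
  [set F in D | ~~ ([set i; j] \subset F)]
  :|: [set v |: F | F in L]
  :|: [set i |: (v |: F) | F in L]
  :|: [set j |: (v |: F) | F in L].

Definition edge_contraction (D : {set {set T}}) (i j : T) : {set {set T}} :=
  [set F in D | i \notin F] :|: [set j |: (F :\ i) | F in [set F in D | i \in F]].

End PosetDefs.

(* Everything rests on explicit descriptions of the two new orders.  In a
   finite strict order, < is the transitive closure of the covering relation;
   this gives induction principles climbing or descending one cover at a time.
   With them we show that, on P - {x, y}, the order of Z(P;x,y,z) is
   "a < b in P, or a <= z and y < b" (zip_rel), and that the order of U(P;x,y)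
   is the order of P with y < x removed, x' put above y, y' and below what lies
   above x, and y' put below x, x' and above what lies below y (unzip_rel).
   - Part (2): a chain of Z(P;x,y,z) is either a chain of P avoiding x and y,
     or arises from a chain of P through x or y by replacing x and y with z;
     these are exactly the faces of the double contraction.
   - Part (1): U(P;x,y) satisfies the zipping hypotheses for x', y', y, and
     the explicit zipped order is that of P.
   - Part (3): both O(U(P;x,y)) and the twice subdivided O(P) consist of the
     chains of P not containing both x and y, and of the sets N u F with F in
     the link of {x, y} and N one of {x'}, {y, x'}, {y'}, {x, y'}, {x', y'}. *)

From Stdlib Require Import FunctionalExtensionality.
From mathcomp Require Import all_boot.
Set Implicit Arguments. Unset Strict Implicit. Unset Printing Implicit Defensive.

Section TransitiveClosure.
Variables (T : finType) (R : rel T).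

Lemma tclos_step a b : R a b -> tclos R a b.
Proof. by move=> Rab; apply/existsP; exists b; rewrite Rab connect0. Qed.

Lemma tclos_trans a b c : tclos R a b -> tclos R b c -> tclos R a c.
Proof.
move=> /existsP[d /andP[Rad Cdb]] /existsP[e /andP[Rbe Cec]].
apply/existsP; exists d; rewrite Rad /=.
by apply: connect_trans Cdb _; apply: connect_trans Cec; apply: connect1.
Qed.

Lemma tclos_ind_r a (P : T -> Prop) :
  (forall c, R a c -> P c) -> (forall b c, P b -> R b c -> P c) ->
  forall b, tclos R a b -> P b.
Proof.
move=> base step b /existsP[c /andP[Rac /connectP[p pth ->]]].
move: (base c Rac) => {Rac}.
elim: p c pth => [|d p IH] c //= /andP[Rcd pth] Pc.
exact: IH pth (step c d Pc Rcd).
Qed.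

Lemma tclos_ind_l b (P : T -> Prop) :
  (forall c, R c b -> P c) -> (forall a c, R a c -> P c -> P a) ->
  forall a, tclos R a b -> P a.
Proof.
move=> base step a /existsP[c /andP[Rac /connectP[p pth Eb]]].
elim: p a c pth Eb Rac => [|d p IH] a c /= pth Eb Rac; first by rewrite -Eb in Rac; exact: base.
by case/andP: pth => Rcd pth; apply: step Rac (IH c d pth Eb Rcd).
Qed.

Lemma tclos_ind (E : rel T) :
  (forall a b, R a b -> E a b) -> (forall a b c, E a b -> E b c -> E a c) ->
  forall a b, tclos R a b -> E a b.
Proof.
by move=> RE Etr a; apply: tclos_ind_r => [|b c Eab /RE]; [apply: RE | apply: Etr].
Qed.

End TransitiveClosure.

Section StrictOrder.
Variables (T : finType) (C : {set T}) (lt : rel T).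
Hypothesis lt_irr : forall a, a \in C -> ~~ lt a a.
Hypothesis lt_trans : forall a b c, a \in C -> b \in C -> c \in C ->
  lt a b -> lt b c -> lt a c.

Local Notation cov := (covers C lt).

Lemma coversP a b : cov a b -> [/\ a \in C, b \in C & lt a b].
Proof. by case/and4P. Qed.

Lemma lt_asym a b : a \in C -> b \in C -> lt a b -> ~~ lt b a.
Proof.
by move=> Ha Hb ab; apply/negP => ba; move: (lt_irr Ha); rewrite (lt_trans Ha Hb Ha ab ba).
Qed.

(* In a finite strict order, lt is generated by the covering relation:
   split an interval at any interior point and induct on its size. *)
Lemma lt_tclos_covers a b : a \in C -> b \in C -> lt a b -> tclos cov a b.
Proof.
pose interval e f := [set c in C | lt e c && lt c f].
have [n] := ubnP #|interval a b|.
elim: n a b => // n IH a b cardn Ha Hb ab.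
have [Hcov | /forall_inPn[d Hd /negPn/andP[ad db]]] :=
  boolP [forall c in C, ~~ (lt a c && lt c b)].
  by apply: tclos_step; rewrite /covers Ha Hb ab.
have shorter e f : interval e f \subset interval a b -> d \notin interval e f ->
    #|interval e f| < n.
  move=> sub_ef dNef; rewrite -ltnS; apply: leq_trans cardn.
  by apply/proper_card/properP; split=> //; exists d; rewrite // inE Hd ad db.
have sub_ad : interval a d \subset interval a b.
  apply/subsetP => c; rewrite /interval !inE => /and3P[Hc -> cd].
  by rewrite Hc (lt_trans Hc Hd Hb cd db).
have sub_db : interval d b \subset interval a b.
  apply/subsetP => c; rewrite /interval !inE => /and3P[Hc dc ->].
  by rewrite Hc (lt_trans Ha Hd Hc ad dc).
have dN e f : d \in [set e; f] -> d \notin interval e f.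
  by rewrite !inE => /orP[]/eqP <-; rewrite (negbTE (lt_irr Hd)) ?andbF.
apply: (@tclos_trans _ _ _ d); apply: IH => //; apply: shorter => //; apply: dN;
  by rewrite !inE eqxx ?orbT.
Qed.

Lemma covers_ind_up a (P : T -> Prop) : a \in C ->
  (forall c, cov a c -> P c) ->
  (forall b c, lt a b -> P b -> cov b c -> P c) ->
  forall b, b \in C -> lt a b -> P b.
Proof.
move=> Ha base step b Hb ab.
suff [] : lt a b /\ P b by [].
move: b {Hb ab} (lt_tclos_covers Ha Hb ab); apply: tclos_ind_r.
  by move=> c ac; split; [case/coversP: ac | apply: base].
move=> b c [ab Pb] bc; have [Hb Hc bc'] := coversP bc.
by split; [apply: lt_trans Ha Hb Hc ab bc' | apply: step Pb bc].
Qed.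

Lemma covers_ind_down b (P : T -> Prop) : b \in C ->
  (forall c, cov c b -> P c) ->
  (forall a c, lt c b -> cov a c -> P c -> P a) ->
  forall a, a \in C -> lt a b -> P a.
Proof.
move=> Hb base step a Ha ab.
suff [] : lt a b /\ P a by [].
move: a {Ha ab} (lt_tclos_covers Ha Hb ab); apply: tclos_ind_l.
  by move=> c cb; split; [case/coversP: cb | apply: base].
move=> a c ac [cb Pc]; have [Ha Hc ac'] := coversP ac.
by split; [apply: lt_trans Ha Hc Hb ac' cb | apply: step cb ac Pc].
Qed.

Lemma lt_same_lower_covers u v : u \in C -> v \in C ->
  (forall w, cov w u = cov w v) -> forall c, c \in C -> lt c u -> lt c v.
Proof.
move=> Hu Hv same; apply: covers_ind_down => // [c|a c _ ac cv].
  by rewrite same => /coversP[].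
by have [Ha Hc ac'] := coversP ac; apply: lt_trans Ha Hc Hv ac' cv.
Qed.

End StrictOrder.

Section Complexes.
Variable T : finType.
Implicit Types (R : rel T) (A B F G N S : {set T}) (D : {set {set T}}).

Definition chain R A : Prop := {in A &, forall a b, [|| a == b, R a b | R b a]}.

Lemma in_interior (C : {set T}) bot top a :
  (a \in C :\ bot :\ top) = (a \in C) && (a \notin [set bot; top]).
Proof. by rewrite !inE negb_or; case: (a \in C); case: (a == bot); case: (a == top). Qed.

Lemma forall_in_setU1 (P : pred T) a A :
  [forall c in a |: A, P c] = P a && [forall c in A, P c].
Proof.
apply/forall_inP/andP => [all_aA|[Pa /forall_inP all_A] c].
  split; first by apply: all_aA; rewrite setU11.
  by apply/forall_inP => c cA; apply: all_aA; rewrite setU1r.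
by rewrite in_setU1 => /orP[/eqP->|/all_A].
Qed.

Lemma chainP R A :
  reflect (chain R A) [forall a in A, forall b in A, [|| a == b, R a b | R b a]].
Proof.
apply: (iffP forall_inP) => ch a; last by move=> Ha; apply/forall_inP => b; apply: ch.
by move=> b Ha Hb; move/forall_inP: (ch a Ha); apply.
Qed.

Lemma order_complexP C lt bot top A :
  reflect (A \subset C :\ bot :\ top /\ chain lt A)
          (A \in order_complex C lt bot top).
Proof. by rewrite inE; apply: (iffP andP) => -[sub /chainP]. Qed.

Lemma subsetD1D1 A a b : A :\ a :\ b \subset A.
Proof. exact: subset_trans (subD1set _ _) (subD1set _ _). Qed.

Lemma chain_sub R A B : A \subset B -> chain R B -> chain R A.
Proof. by move=> /subsetP sub ch a b /sub Ha /sub Hb; apply: ch. Qed.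

Lemma chain_mono R R' A :
  {in A &, forall a b, R a b -> R' a b} -> chain R A -> chain R' A.
Proof.
move=> RR' ch a b Ha Hb.
by case/or3P: (ch a b Ha Hb) => [->|/RR'->|/RR'->]; rewrite ?orbT.
Qed.

Lemma chain_setU1 R v A :
  chain R A -> {in A, forall b, [|| v == b, R v b | R b v]} -> chain R (v |: A).
Proof.
move=> ch cmp a b; rewrite !in_setU1 => /orP[/eqP->|Ha] /orP[/eqP->|Hb].
- by rewrite eqxx.
- exact: cmp.
- by case/or3P: (cmp a Ha) => [/eqP->|->|->]; rewrite ?eqxx ?orbT.
- exact: ch.
Qed.

Lemma chain_setU R A B : chain R A -> chain R B ->
  {in A & B, forall a b, [|| a == b, R a b | R b a]} -> chain R (A :|: B).
Proof.
move=> chA chB cross a b; rewrite !inE => /orP[Ha|Ha] /orP[Hb|Hb].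
- exact: chA.
- exact: cross.
- by case/or3P: (cross b a Hb Ha) => [/eqP->|->|->]; rewrite ?eqxx ?orbT.
- exact: chB.
Qed.

Lemma chain_set1 R v : chain R [set v].
Proof. by move=> a b; rewrite !inE => /eqP-> /eqP->; rewrite eqxx. Qed.

Lemma chain_set2 R a b : [|| a == b, R a b | R b a] -> chain R [set a; b].
Proof.
by move=> ab; apply: chain_setU1 => [|c]; [apply: chain_set1 | rewrite inE => /eqP->].
Qed.

Lemma setI_by_members A N S :
  N \subset S -> {in S, forall e, (e \in A) = (e \in N)} -> A :&: S = N.
Proof.
move=> /subsetP NS AN; apply/setP => e; rewrite inE.
have [eS|eNS] := boolP (e \in S); first by rewrite andbT AN.
by rewrite andbF; apply/esym/negP => /NS; rewrite (negbTE eNS).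
Qed.

Lemma linkP D S F : reflect ([disjoint F & S] /\ F :|: S \in D) (F \in link D S).
Proof. by rewrite inE; apply: andP. Qed.

Lemma edge_contractionP D i j A :
  reflect ((A \in D /\ i \notin A) \/ exists2 F, F \in D /\ i \in F & A = j |: (F :\ i))
          (A \in edge_contraction D i j).
Proof.
rewrite inE; apply: (iffP orP) => [[|/imsetP[F]]|[[HA iA]|[F [HF iF] ->]]].
- by rewrite inE => /andP[HA iA]; left.
- by rewrite inE => /andP[HF iF] ->; right; exists F.
- by left; rewrite inE HA.
- by right; apply/imsetP; exists F; rewrite // inE HF.
Qed.

Lemma edge_contraction2P D x y z A :
  reflect ((A \in D /\ x \notin A /\ y \notin A) \/
           exists2 F, F \in D /\ (x \in F) || (y \in F) & A = z |: (F :\ x :\ y))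
          (A \in edge_contraction (edge_contraction D y x) x z).
Proof.
have eq_faces F G : (forall e, (e \in G) = (e \in F :\ x :\ y)) ->
    z |: G = z |: (F :\ x :\ y).
  by move=> FG; congr (_ |: _); apply/setP => e; rewrite FG.
apply: (iffP (edge_contractionP _ _ _ _)).
  case=> [[/edge_contractionP[[HA yA]|[F _ ->]] xA]|[G [/edge_contractionP HG xG] ->]].
  - by left.
  - by rewrite setU11 in xA.
  case: HG => [[HG yG]|[F [HF yF] ->]]; right.
    exists G; rewrite ?xG //; apply: eq_faces => e; rewrite !inE.
    by case: (eqVneq e y) => [->|]; rewrite ?(negbTE yG) ?andbF.
  exists F; rewrite ?yF ?orbT //; apply: eq_faces => e; rewrite !inE.
  by case: (e == x); case: (e == y).
case=> [[HA [xA yA]]|[F [HF xyF] ->]].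
  by left; split=> //; apply/edge_contractionP; left.
have [yF | yF] := boolP (y \in F).
  right; exists (x |: (F :\ y)).
    by split; [apply/edge_contractionP; right; exists F | rewrite setU11].
  by apply/esym/eq_faces => e; rewrite !inE; case: (e == x); case: (e == y).
right; exists F; last by apply/esym/eq_faces => e; rewrite !inE;
  case: (eqVneq e y) => [->|]; rewrite ?(negbTE yF) ?andbF.
by rewrite (negbTE yF) orbF in xyF; split=> //; apply/edge_contractionP; left.
Qed.

Lemma edge_subdivisionP D i j v A :
  reflect ((A \in D /\ ~~ ([set i; j] \subset A)) \/
           exists2 F, F \in link D [set i; j] &
             [\/ A = v |: F, A = i |: (v |: F) | A = j |: (v |: F)])
    (A \in edge_subdivision D i j v).
Proof.
rewrite /edge_subdivision !inE; apply: (iffP idP).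
  case/orP => [/orP[/orP[/andP[HA ijA]|/imsetP[F HF ->]]|/imsetP[F HF ->]]|/imsetP[F HF ->]].
  - by left.
  - by right; exists F => //; constructor 1.
  - by right; exists F => //; constructor 2.
  - by right; exists F => //; constructor 3.
case=> [[HA ijA]|[F HF [->|->|->]]].
- by rewrite HA ijA.
- by rewrite (imset_f (fun F => v |: F) HF) !orbT.
- by rewrite (imset_f (fun F => i |: (v |: F)) HF) !orbT.
- by rewrite (imset_f (fun F => j |: (v |: F)) HF) !orbT.
Qed.

End Complexes.

Section Zipping.
Variables (T : finType) (C : {set T}) (lt : rel T) (bot top x y z : T).
Hypothesis lt_irr : forall a, a \in C -> ~~ lt a a.
Hypothesis lt_trans : forall a b c, a \in C -> b \in C -> c \in C ->
  lt a b -> lt b c -> lt a c.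
Hypothesis zipxyz : zippable C lt bot top x y z.
Implicit Types A B F H : {set T}.

Let Hx : x \in C. Proof. by case: zipxyz => -[]. Qed.
Let Hy : y \in C. Proof. by case: zipxyz => -[]. Qed.
Let Hz : z \in C. Proof. by case: zipxyz => -[]. Qed.
Let y_neq_z : y != z. Proof. by case: zipxyz => _ _ []. Qed.
Let covers_x w : covers C lt w x = (w == y) || (w == z).
Proof. by case: zipxyz => _ _ []. Qed.
Let lt_y_x : lt y x.
Proof. by have /coversP[] : covers C lt y x by rewrite covers_x eqxx. Qed.
Let lt_z_x : lt z x.
Proof. by have /coversP[] : covers C lt z x by rewrite covers_x eqxx orbT. Qed.

Let z_neq_x : z != x.
Proof. by apply: contraTneq lt_z_x => ->; apply: lt_irr. Qed.

(* By (i), nothing lies strictly between y and x, in particular not z. *)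
Lemma zip_nlt_y_z : ~~ lt y z.
Proof.
apply/negP => yz.
have /and4P[_ _ _ /forall_inP/(_ z Hz)] : covers C lt y x by rewrite covers_x eqxx.
by rewrite yz lt_z_x.
Qed.

(* By (iii), y and z have the same elements below them. *)
Lemma zip_lt_y_z c : c \in C -> lt c y = lt c z.
Proof.
case: zipxyz => _ _ _ _ same Hc.
by apply/idP/idP; apply: (lt_same_lower_covers lt_irr lt_trans) => // w; rewrite same.
Qed.

(* By (i), everything below x lies below z, or is y or z. *)
Lemma zip_lt_x c : c \in C -> lt c x -> [|| c == y, c == z | lt c z].
Proof.
move: c; apply: (covers_ind_down lt_irr lt_trans) => // [c|a c _ ac].
  by rewrite covers_x orbA => ->.
have [Ha Hc ac'] := coversP ac.
case/or3P => [/eqP Ec|/eqP Ec|cz]; rewrite ?Ec in ac'.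
- by rewrite -zip_lt_y_z // ac' !orbT.
- by rewrite ac' !orbT.
- by rewrite (lt_trans Ha Hc Hz ac' cz) !orbT.
Qed.

Local Notation C' := (zip_carrier C x y).

Definition zip_rel (a b : T) : bool :=
  [&& a \in C', b \in C' & lt a b || ((a == z) || lt a z) && lt y b].

Lemma zip_ltE : zip_lt C lt x y z =2 zip_rel.
Proof.
have inC a : a \in C' -> a \in C by rewrite !inE => /and3P[].
move=> a b; apply/idP/idP.
  apply: tclos_ind => {a b} [a b /and3P[Ha Hb ab]|a b c].
    by rewrite /zip_rel Ha Hb; case/orP: ab => [->|/andP[/eqP-> ->]]; rewrite ?eqxx ?orbT.
  move=> /and3P[Ha Hb ab] /and3P[_ Hc bc]; rewrite /zip_rel Ha Hc /=.
  move: (inC a Ha) (inC b Hb) (inC c Hc) => {}Ha {}Hb {}Hc.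
  case/orP: ab => [ab|/andP[az yb]]; case/orP: bc => [bc|/andP[bz yc]].
  - by rewrite (lt_trans Ha Hb Hc ab bc).
  - case/orP: bz => [/eqP Eb|bz]; first by subst b; rewrite ab yc !orbT.
    by rewrite (lt_trans Ha Hb Hz ab bz) yc !orbT.
  - by rewrite (lt_trans Hy Hb Hc yb bc) az orbT.
  - case/orP: bz => [/eqP Eb|bz]; first by subst b; move: zip_nlt_y_z; rewrite yb.
    by move: zip_nlt_y_z; rewrite (lt_trans Hy Hb Hz yb bz).
case/and3P => Ha Hb /orP[ab|/andP[/orP[/eqP Ea|az] yb]].
- by apply: tclos_step; rewrite /= Ha Hb ab.
- by apply: tclos_step; rewrite /= Ha Hb Ea eqxx yb orbT.
- have Hz' : z \in C' by rewrite !inE Hz eq_sym y_neq_z z_neq_x.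
  apply: (@tclos_trans _ _ _ z); apply: tclos_step; rewrite /= ?Ha ?Hb Hz' ?az //.
  by rewrite eqxx yb orbT.
Qed.

Lemma zip_rel_lt a b : a != z -> zip_rel a b -> lt a b.
Proof.
move=> Naz /and3P[Ha Hb /orP[//|/andP[/orP[/eqP Eaz|az] yb]]].
  by rewrite Eaz eqxx in Naz.
move: Ha Hb; rewrite !inE => /and3P[_ _ Ha] /and3P[_ _ Hb].
by rewrite -zip_lt_y_z // in az; apply: lt_trans Ha Hy Hb az yb.
Qed.

Lemma zip_chain_split A : A \subset C' -> chain zip_rel A ->
  chain lt A \/ (z \in A /\ chain lt (y |: (A :\ z))).
Proof.
move=> /subsetP AC' ch.
have AC c : c \in A -> c \in C by move/AC'; rewrite !inE => /and3P[].
have [/chainP|] := boolP [forall c in A, forall d in A, [|| c == d, lt c d | lt d c]].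
  by left.
move=> /forall_inPn[c Hc /forall_inPn[d Hd]]; rewrite !negb_or => /and3P[Ncd Nlcd Nldc].
(* some comparison in A is not one of P: it starts at z and ends above y *)
have [zA [b Hb [yb Nzb]]] : z \in A /\ exists2 b, b \in A & lt y b /\ ~~ lt z b.
  have from_z e f : e \in A -> f \in A -> ~~ lt e f -> zip_rel e f ->
      z \in A /\ exists2 b, b \in A & lt y b /\ ~~ lt z b.
    move=> He Hf Nef ef; have [Eez|Nez] := eqVneq e z; last by rewrite (zip_rel_lt Nez ef) in Nef.
    subst e; split=> //; exists f => //; split=> //.
    by case/and3P: ef => _ _; rewrite (negbTE Nef) => /andP[].
  by case/or3P: (ch c d Hc Hd) => [cd|/from_z|/from_z]; [rewrite cd in Ncd|apply|apply].
right; split=> //; apply: chain_setU1 => [e f /setD1P[Nez He] /setD1P[Nfz Hf]|e /setD1P[Nez He]].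
  case/or3P: (ch e f He Hf) => [->//|/(zip_rel_lt Nez)->|/(zip_rel_lt Nfz)->]; by rewrite ?orbT.
case/or3P: (ch e z He zA) => [/eqP Eez|ez|ze]; first by rewrite Eez eqxx in Nez.
  by rewrite zip_lt_y_z ?AC // (zip_rel_lt Nez ez) !orbT.
case/and3P: ze => _ _ /orP[ze|/andP[_ ->]]; last by rewrite orbT.
have Nbz : b != z by apply: contraNneq zip_nlt_y_z => <-.
case/or3P: (ch e b He Hb) => [/eqP->|eb|be]; first by rewrite yb orbT.
  by rewrite (lt_trans (AC z zA) (AC e He) (AC b Hb) ze (zip_rel_lt Nez eb)) in Nzb.
by rewrite (lt_trans Hy (AC b Hb) (AC e He) yb (zip_rel_lt Nbz be)) orbT.
Qed.

Lemma zip_chain_z H : H \subset C' -> chain lt H ->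
  {in H, forall c, [|| c == z, lt c z, lt z c | lt y c]} -> chain zip_rel (z |: H).
Proof.
move=> /subsetP HC' ch cmp_z.
have zC' : z \in C'.
  by rewrite !inE Hz eq_sym y_neq_z z_neq_x.
have ltZ a b : a \in H -> b \in H -> lt a b -> zip_rel a b.
  by move=> Ha Hb ab; rewrite /zip_rel !HC' ?ab.
apply: chain_setU1 => [|c Hc]; first by apply: chain_mono ch.
rewrite /zip_rel zC' HC' //=.
by case/or4P: (cmp_z c Hc) => [/eqP->|->|->|->]; rewrite ?eqxx ?orbT.
Qed.

Local Notation I := (C :\ bot :\ top).
Local Notation O := (order_complex C lt bot top).

Let interior_xyz : [/\ x \in I, y \in I & z \in I].
Proof. by case: zipxyz => _ [xbt ybt zbt]; rewrite !in_interior Hx Hy Hz xbt ybt zbt. Qed.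

Lemma zip_interior B :
  B \subset C' :\ bot :\ top <-> [/\ B \subset I, x \notin B & y \notin B].
Proof.
have -> : C' :\ bot :\ top = I :\ x :\ y.
  by apply/setP => e; rewrite !inE; case: (e == x); case: (e == y); rewrite ?andbF.
split=> [/subsetP sub|[/subsetP sub xB yB]].
  split; first by apply/subsetP => e /sub /setD1P[_ /setD1P[]].
    by apply/negP => /sub; rewrite !inE eqxx andbF.
  by apply/negP => /sub; rewrite !inE eqxx.
apply/subsetP => e eB; rewrite 2!in_setD1 sub // andbT.
by apply/andP; split; apply: contraTneq eB => ->.
Qed.

Lemma zip_chain_face A : A \subset C' :\ bot :\ top -> chain zip_rel A ->
  (A \in O /\ x \notin A /\ y \notin A) \/
  exists2 F, F \in O /\ (x \in F) || (y \in F) & A = z |: (F :\ x :\ y).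
Proof.
move=> subA chA; have [AI xA yA] := (zip_interior A).1 subA.
have [_ yI _] := interior_xyz.
have AC' : A \subset C' by apply: subset_trans subA (subsetD1D1 _ _ _).
case: (zip_chain_split AC' chA) => [ltA|[zA ltA]].
  by left; split=> //; apply/order_complexP.
right; exists (y |: (A :\ z)).
  split; last by rewrite setU11 orbT.
  apply/order_complexP; split=> //; rewrite subUset sub1set yI.
  by apply: subset_trans (subD1set _ _) AI.
apply/setP => e; rewrite !inE.
case: (eqVneq e z) => [->//|Nez]; case: (eqVneq e y) => [->|_]; first by rewrite (negbTE yA).
by case: (eqVneq e x) => [->|]; rewrite ?(negbTE xA) ?andbF.
Qed.

Lemma zip_face_chain F : F \in O -> (x \in F) || (y \in F) ->
  z |: (F :\ x :\ y) \subset C' :\ bot :\ top /\ chain zip_rel (z |: (F :\ x :\ y)).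
Proof.
case/order_complexP => FI ltF xyF; have [_ _ zI] := interior_xyz.
have HI : F :\ x :\ y \subset C' :\ bot :\ top.
  apply/zip_interior; split; [|by rewrite !inE eqxx andbF|by rewrite !inE eqxx].
  exact: subset_trans (subsetD1D1 _ _ _) FI.
split.
  rewrite subUset HI andbT; apply/zip_interior.
  by split; [rewrite sub1set | rewrite inE eq_sym | rewrite inE].
apply: zip_chain_z; first exact: subset_trans HI (subsetD1D1 _ _ _).
  exact: chain_sub (subsetD1D1 _ _ _) ltF.
move=> c /setD1P[Ncy /setD1P[Ncx cF]].
have Hc : c \in C by move/subsetP: FI => /(_ c cF); rewrite in_interior => /andP[].
case/orP: xyF => [xF|yF].
  case/or3P: (ltF c x cF xF) => [/eqP Ecx|cx|xc]; first by rewrite Ecx eqxx in Ncx.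
    case/or3P: (zip_lt_x Hc cx) => [/eqP Ecy|->|->]; rewrite ?orbT //.
    by rewrite Ecy eqxx in Ncy.
  by rewrite (lt_trans Hz Hx Hc lt_z_x xc) !orbT.
case/or3P: (ltF c y cF yF) => [/eqP Ecy|cy|->]; last by rewrite !orbT.
  by rewrite Ecy eqxx in Ncy.
by rewrite -zip_lt_y_z // cy orbT.
Qed.

Lemma zip_order_complex :
  order_complex C' (zip_lt C lt x y z) bot top =
  edge_contraction (edge_contraction O y x) x z.
Proof.
have chainZ B : chain (zip_lt C lt x y z) B <-> chain zip_rel B.
  by split; apply: chain_mono => a b _ _; rewrite zip_ltE.
apply/setP => A; apply/order_complexP/edge_contraction2P.
  by case=> subA /chainZ; apply: zip_chain_face.
case=> [[/order_complexP[AI ltA] [xA yA]]|[F [FO xyF] ->]]; last first.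
  by have [sub ch] := zip_face_chain FO xyF; split=> //; apply/chainZ.
have subA : A \subset C' :\ bot :\ top by apply/zip_interior.
have /subsetP AC' := subset_trans subA (subsetD1D1 _ _ _).
split=> //; apply/chainZ; apply: chain_mono ltA => a b Ha Hb ab.
by rewrite /zip_rel !AC' ?ab.
Qed.

End Zipping.

Section Unzipping.
Variables (T : finType) (C : {set T}) (lt : rel T) (x y x' y' : T).
Hypothesis lt_irr : forall a, a \in C -> ~~ lt a a.
Hypothesis lt_trans : forall a b c, a \in C -> b \in C -> c \in C ->
  lt a b -> lt b c -> lt a c.
Hypotheses (Hx : x \in C) (Hy : y \in C) (cov_yx : covers C lt y x).
Hypotheses (x'C : x' \notin C) (y'C : y' \notin C) (x'_neq_y' : x' != y').

Local Notation U := (unzip_carrier C x' y').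

Let lt_y_x : lt y x. Proof. by case/coversP: cov_yx. Qed.
Let nlt_x_y : ~~ lt x y. Proof. by have := lt_asym lt_irr lt_trans Hy Hx lt_y_x. Qed.
Let y_neq_x : (y == x) = false.
Proof. by apply: contraTF lt_y_x => /eqP->; apply: lt_irr. Qed.
Let y'_neq_x' : (y' == x') = false. Proof. by rewrite eq_sym (negbTE x'_neq_y'). Qed.
Let x_not_below_y b : b \in C -> (b == x) || lt x b -> (b == y) || lt b y -> False.
Proof.
move=> Hb /orP[/eqP->|xb] /orP[/eqP Eby|b_y].
- by move: y_neq_x; rewrite Eby eqxx.
- by move: nlt_x_y; rewrite b_y.
- by move: nlt_x_y; rewrite -Eby xb.
- by move: nlt_x_y; rewrite (lt_trans Hx Hb Hy xb b_y).
Qed.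
Let old_neq_x' a : a \in C -> (a == x') = false.
Proof. by apply: contraTF => /eqP->. Qed.
Let old_neq_y' a : a \in C -> (a == y') = false.
Proof. by apply: contraTF => /eqP->. Qed.
Let x'_neq_old a : a \in C -> (x' == a) = false.
Proof. by rewrite eq_sym; apply: old_neq_x'. Qed.
Let y'_neq_old a : a \in C -> (y' == a) = false.
Proof. by rewrite eq_sym; apply: old_neq_y'. Qed.
Let x_neq_y : (x == y) = false. Proof. by rewrite eq_sym y_neq_x. Qed.

Definition unzip_rel (a b : T) : bool :=
  if a == x' then (b \in C) && lt x b
  else if a == y' then (b == x') || (b \in C) && ((b == x) || lt x b)
  else (a \in C) &&
       (if b == x' then (a == y) || lt a y
        else if b == y' then lt a y
        else (b \in C) && lt a b && ~~ ((a == y) && (b == x))).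

Section UnzipRelValues.
Variables a b : T.
Hypotheses (Ha : a \in C) (Hb : b \in C).

Lemma unzip_rel_old : unzip_rel a b = lt a b && ~~ ((a == y) && (b == x)).
Proof. by rewrite /unzip_rel !old_neq_x' // !old_neq_y' // Ha Hb. Qed.
Lemma unzip_rel_old_x' : unzip_rel a x' = (a == y) || lt a y.
Proof. by rewrite /unzip_rel eqxx old_neq_x' // old_neq_y' // Ha. Qed.
Lemma unzip_rel_old_y' : unzip_rel a y' = lt a y.
Proof.
by rewrite /unzip_rel eqxx y'_neq_x' old_neq_x' // old_neq_y' // Ha.
Qed.
Lemma unzip_rel_x'_old : unzip_rel x' b = lt x b.
Proof. by rewrite /unzip_rel eqxx Hb. Qed.
Lemma unzip_rel_y'_old : unzip_rel y' b = (b == x) || lt x b.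
Proof. by rewrite /unzip_rel eqxx y'_neq_x' old_neq_x' ?Hb. Qed.

End UnzipRelValues.

Lemma unzip_rel_new : [/\ unzip_rel x' x' = false, unzip_rel x' y' = false,
  unzip_rel y' x' = true & unzip_rel y' y' = false].
Proof.
by rewrite /unzip_rel !eqxx y'_neq_x' (negbTE x'C) (negbTE y'C).
Qed.

Lemma unzip_rel_support a b : unzip_rel a b -> a \in U /\ b \in U.
Proof.
rewrite /unzip_rel !inE; case: (a == x') => [/andP[-> _]|]; first by rewrite !orbT.
case: (a == y') => [/orP[->|/andP[-> _]]|/andP[-> Rab]]; rewrite ?orbT //.
by split=> //; case: (b == x') Rab => //; case: (b == y') => // /andP[/andP[->]]; rewrite orbT.
Qed.

(* Transitivity, by cases on which of a, b, c are new elements; besides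
   transitivity in P, it uses that no element lies both above x and below y,
   and that nothing lies strictly between y and x. *)
Lemma unzip_rel_trans a b c : unzip_rel a b -> unzip_rel b c -> unzip_rel a c.
Proof.
have [Rx'x' Rx'y' Ry'x' Ry'y'] := unzip_rel_new.
move=> ab bc; have [aU bU] := unzip_rel_support ab; have [_ cU] := unzip_rel_support bc.
move: ab bc; rewrite !inE in aU bU cU.
case/or3P: aU => [/eqP->|/eqP->|Ha]; case/or3P: bU => [/eqP->|/eqP->|Hb];
  case/or3P: cU => [/eqP->|/eqP->|Hc];
  rewrite ?Rx'x' ?Rx'y' ?Ry'x' ?Ry'y' ?unzip_rel_x'_old ?unzip_rel_y'_old
    ?unzip_rel_old_x' ?unzip_rel_old_y' ?unzip_rel_old //.
- by move=> xb b_y; case: (x_not_below_y Hb _ b_y); rewrite xb orbT.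
- by move=> xb b_y; case: (x_not_below_y Hb _ _); rewrite ?xb ?b_y orbT.
- by move=> xb /andP[bc _]; apply: lt_trans Hx Hb Hc xb bc.
- by move=> _ ->; rewrite orbT.
- by move=> xb b_y; case: (x_not_below_y Hb xb); rewrite b_y orbT.
- by move=> /orP[/eqP->|xb] /andP[bc _]; rewrite ?bc ?(lt_trans Hx Hb Hc xb bc) orbT.
- move=> ay xc; have ac : lt a c.
    case/orP: ay => [/eqP->|ay]; first exact: lt_trans Hy Hx Hc lt_y_x xc.
    exact: lt_trans Ha Hx Hc (lt_trans Ha Hy Hx ay lt_y_x) xc.
  by rewrite ac; apply: contraTN xc => /andP[_ /eqP->]; apply: lt_irr.
- by move=> ->; rewrite orbT.
- move=> ay xc; have ax := lt_trans Ha Hy Hx ay lt_y_x.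
  rewrite (_ : lt a c); last by case/orP: xc => [/eqP->//|]; apply: lt_trans Ha Hx Hc ax.
  by apply: contraTN ay => /andP[/eqP-> _]; apply: lt_irr.
- by move=> /andP[ab _] /orP[/eqP<-|b_y]; rewrite ?ab ?(lt_trans Ha Hb Hy ab b_y) orbT.
- by move=> /andP[ab _] b_y; apply: lt_trans Ha Hb Hy ab b_y.
- move=> /andP[ab Nab] /andP[bc Nbc]; rewrite (lt_trans Ha Hb Hc ab bc).
  apply/negP => /andP[/eqP Ea /eqP Ec]; subst a c.
  by case/and4P: cov_yx => _ _ _ /forall_inP/(_ b Hb); rewrite ab bc.
Qed.

Local Notation ucov := (unzip_cov C lt x y x' y').
Local Notation ult := (unzip_lt C lt x y x' y').

Let ucov_lt a b : ucov a b -> ult a b. Proof. exact: tclos_step. Qed.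

Lemma unzip_lt_x'_old b : b \in C -> lt x b -> ult x' b.
Proof.
move: b; apply: (covers_ind_up lt_irr lt_trans Hx) => [c xc|b c xb x'b bc].
  by apply: ucov_lt; rewrite /unzip_cov eqxx xc orbT.
apply: tclos_trans x'b (ucov_lt _); rewrite /unzip_cov bc /=.
by apply/orP; left; apply: (contraNN _ nlt_x_y) => /andP[/eqP <- _].
Qed.

Lemma unzip_lt_old_y' a : a \in C -> lt a y -> ult a y'.
Proof.
move: a; apply: (covers_ind_down lt_irr lt_trans Hy) => [c cy|a c cy ac cy'].
  by apply: ucov_lt; rewrite /unzip_cov cy eqxx !orbT.
apply: tclos_trans (ucov_lt _) cy'; rewrite /unzip_cov ac /=.
by apply/orP; left; apply: (contraNN _ nlt_x_y) => /andP[_ /eqP <-].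
Qed.

Lemma unzip_lt_old a b : a \in C -> b \in C -> lt a b -> ~~ ((a == y) && (b == x)) ->
  ult a b.
Proof.
move=> Ha Hb ab Nyx.
suff [//|[Ea Eb]] : ult a b \/ (a = y /\ b = x) by rewrite Ea Eb !eqxx in Nyx.
move: b Hb ab {Nyx}; apply: (covers_ind_up lt_irr lt_trans Ha) => [c ac|b c ab].
  have [/andP[/eqP Ea /eqP Ec]|Nac] := boolP ((a == y) && (c == x)); first by right.
  by left; apply: ucov_lt; rewrite /unzip_cov ac Nac.
case=> [a_b|[-> ->]] bc; left.
  have [/andP[/eqP Eb /eqP Ec]|Nbc] := boolP ((b == y) && (c == x)).
    subst b c; apply: tclos_trans (unzip_lt_old_y' Ha ab) (ucov_lt _).
    by rewrite /unzip_cov !eqxx !orbT.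
  by apply: tclos_trans a_b (ucov_lt _); rewrite /unzip_cov bc Nbc.
apply: (@tclos_trans _ _ _ x'); apply: ucov_lt; rewrite /unzip_cov ?eqxx ?bc ?orbT //.
Qed.

Lemma unzip_ltE : ult =2 unzip_rel.
Proof.
have [Rx'x' Rx'y' Ry'x' Ry'y'] := unzip_rel_new.
move=> a b; apply/idP/idP.
  apply: tclos_ind => [{}a {}b|]; last exact: unzip_rel_trans.
  case/or4P => [/andP[/coversP[Ha Hb ab] Nab]|/andP[/eqP-> /coversP[_ Hb xb]]|
    /andP[/coversP[Ha _ ay] /eqP->]|/orP[/andP[/eqP-> /eqP->]|/orP[]/andP[/eqP-> /eqP->]]].
  - by rewrite unzip_rel_old ?ab.
  - by rewrite unzip_rel_x'_old.
  - by rewrite unzip_rel_old_y'.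
  - by [].
  - by rewrite unzip_rel_old_x' ?eqxx.
  - by rewrite unzip_rel_y'_old ?eqxx.
move=> ab; have [aU bU] := unzip_rel_support ab; move: ab; rewrite !inE in aU bU.
case/or3P: aU => [/eqP->|/eqP->|Ha]; case/or3P: bU => [/eqP->|/eqP->|Hb];
  rewrite ?Rx'x' ?Rx'y' ?Ry'x' ?Ry'y' ?unzip_rel_x'_old ?unzip_rel_y'_old
    ?unzip_rel_old_x' ?unzip_rel_old_y' ?unzip_rel_old //.
- exact: unzip_lt_x'_old.
- by move=> _; apply: ucov_lt; rewrite /unzip_cov !eqxx !orbT.
- case/orP=> [/eqP->|xb]; first by apply: ucov_lt; rewrite /unzip_cov !eqxx !orbT.
  apply: (@tclos_trans _ _ _ x); first by apply: ucov_lt; rewrite /unzip_cov !eqxx !orbT.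
  by apply: unzip_lt_old; rewrite // eq_sym y_neq_x.
- case/orP=> [/eqP->|ay]; first by apply: ucov_lt; rewrite /unzip_cov !eqxx !orbT.
  by apply: tclos_trans (unzip_lt_old_y' Ha ay) (ucov_lt _); rewrite /unzip_cov !eqxx !orbT.
- exact: unzip_lt_old_y'.
- by case/andP; apply: unzip_lt_old.
Qed.

(* The same, as an equality of relations, to rewrite inside zippable and
   order_complex. *)
Lemma unzip_lt_eq : ult = unzip_rel.
Proof. by do 2 apply: functional_extensionality => ?; apply: unzip_ltE. Qed.

Lemma unzip_rel_irr a : ~~ unzip_rel a a.
Proof.
apply/negP => aa; have [aU _] := unzip_rel_support aa; move: aa; rewrite !inE in aU.
have [Rx'x' _ _ Ry'y'] := unzip_rel_new.
case/or3P: aU => [/eqP->|/eqP->|Ha]; rewrite ?Rx'x' ?Ry'y' //.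
by rewrite unzip_rel_old // (negbTE (lt_irr Ha)).
Qed.

Lemma unzip_rel_y'_y a : unzip_rel a y' = unzip_rel a y.
Proof.
have [_ Rx'y' _ Ry'y'] := unzip_rel_new.
have [aU|aNU] := boolP (a \in U); last first.
  by apply/idP/idP => /unzip_rel_support[aU _]; rewrite aU in aNU.
rewrite !inE in aU; case/or3P: aU => [/eqP->|/eqP->|Ha].
- by rewrite Rx'y' unzip_rel_x'_old // (negbTE nlt_x_y).
- by rewrite Ry'y' unzip_rel_y'_old // y_neq_x (negbTE nlt_x_y).
- by rewrite unzip_rel_old_y' // unzip_rel_old // y_neq_x andbF andbT.
Qed.

Lemma unzip_covers_x' w : covers U unzip_rel w x' = (w == y') || (w == y).
Proof.
have [Rx'x' _ Ry'x' Ry'y'] := unzip_rel_new.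
have noC c : c \in C -> ~~ (unzip_rel y' c && unzip_rel c x').
  move=> Hc; apply/negP; rewrite unzip_rel_y'_old ?unzip_rel_old_x' //.
  by case/andP => /(x_not_below_y Hc).
rewrite /covers !forall_in_setU1 !inE eqxx /=.
have [->|Nwx'] := eqVneq w x'.
  by rewrite Rx'x' /= (negbTE x'_neq_y') (eq_sym x' y) old_neq_x'.
have [->|Nwy'] := eqVneq w y'.
  by rewrite Ry'x' Ry'y' /= Rx'x'; apply/forall_inP.
rewrite Rx'x' andbF /=; have [Hw|wNC] := boolP (w \in C); last first.
  by rewrite andFb; apply/esym/negbTE; apply: contraNneq wNC => ->.
rewrite unzip_rel_old_x' // unzip_rel_old_y' // Ry'x' andbT.
have [->|Nwy] := eqVneq w y; last by rewrite /=; case: (lt w y).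
rewrite (negbTE (lt_irr Hy)) /=; apply/forall_inP => c Hc.
rewrite unzip_rel_old // unzip_rel_old_x' //; apply/negP => /andP[/andP[yc _]].
case/orP=> [/eqP Ecy|cy]; first by rewrite Ecy (negbTE (lt_irr Hy)) in yc.
by have := lt_asym lt_irr lt_trans Hy Hc yc; rewrite cy.
Qed.

Lemma unzip_upper_bound u :
  [&& u \in U, unzip_rel y' u & unzip_rel y u] = (u == x') || (u \in C) && lt x u.
Proof.
have [_ _ Ry'x' Ry'y'] := unzip_rel_new.
rewrite !inE; have [->|_] := eqVneq u x'; first by rewrite Ry'x' unzip_rel_old_x' ?eqxx.
have [->|_] := eqVneq u y'; first by rewrite Ry'y' (negbTE y'C) andbF.
have [Hu|] := boolP (u \in C) => //=.
rewrite unzip_rel_y'_old // unzip_rel_old // eqxx /=.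
have [->|Nux] := eqVneq u x; first by rewrite (negbTE (lt_irr Hx)) andbF.
by apply/andP/idP => [[]|xu] //; rewrite (lt_trans Hy Hx Hu lt_y_x xu).
Qed.

Lemma unzip_zippable bot top : bot \in C -> top \in C -> y \notin [set bot; top] ->
  zippable U unzip_rel bot top x' y' y.
Proof.
move=> Hbot Htop ybt.
have new_bt v : v \notin C -> v \notin [set bot; top].
  by move=> vC; rewrite !inE; apply/norP; split; apply: contraNneq vC => ->.
split.
- by rewrite !inE !eqxx Hy !orbT.
- by split=> //; apply: new_bt.
- split; first by rewrite eq_sym old_neq_y'.
  by move=> w; rewrite unzip_covers_x'.
- rewrite /=; split.
    rewrite unzip_upper_bound eqxx /=; apply/forallP => v; apply/implyP.
    rewrite unzip_upper_bound => /orP[/eqP->|/andP[Hv xv]]; first by rewrite unzip_rel_irr.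
    by rewrite unzip_rel_old_x' //; apply/negP => /(x_not_below_y Hv); rewrite xv orbT; apply.
  move=> u /andP[]; rewrite unzip_upper_bound => /orP[/eqP//|/andP[Hu xu]].
  move/forallP/(_ x')/implyP; rewrite unzip_upper_bound eqxx unzip_rel_x'_old //.
  by move/(_ isT); rewrite xu.
- move=> w; rewrite /covers; under eq_forallb do rewrite unzip_rel_y'_y.
  by rewrite unzip_rel_y'_y !inE eqxx Hy !orbT.
Qed.

Lemma zip_after_unzip bot top : bot \in C -> top \in C -> y \notin [set bot; top] ->
  same_poset (zip_carrier U x' y') (zip_lt U unzip_rel x' y' y) C lt.
Proof.
move=> Hbot Htop ybt.
have carrier : zip_carrier U x' y' = C.
  apply/setP => e; rewrite !inE.
  have [->|_] := eqVneq e y'; first by rewrite (negbTE y'C).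
  by have [->|_] := eqVneq e x'; rewrite ?(negbTE x'C).
split=> // a b; rewrite carrier => Ha Hb.
have trU a1 a2 a3 : a1 \in U -> a2 \in U -> a3 \in U ->
  unzip_rel a1 a2 -> unzip_rel a2 a3 -> unzip_rel a1 a3.
  by move=> _ _ _; apply: unzip_rel_trans.
rewrite (zip_ltE (fun a _ => unzip_rel_irr a) trU (unzip_zippable Hbot Htop ybt)).
rewrite /zip_rel carrier Ha Hb /= unzip_rel_y'_old // !unzip_rel_old // y_neq_x andbF andbT.
apply/idP/idP => [/orP[/andP[//]|/andP[ay xb]]|ab].
  have ax : lt a x by case/orP: ay => [/eqP->//|ay]; apply: lt_trans Ha Hy Hx ay lt_y_x.
  by case/orP: xb => [/eqP->//|]; apply: lt_trans Ha Hx Hb ax.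
by case: (boolP ((a == y) && (b == x))) => [/andP[-> ->]|Nab]; rewrite ?ab ?Nab ?orbT.
Qed.

Section UnzipComplex.
Variables bot top : T.
Hypotheses (Hbot : bot \in C) (Htop : top \in C).
Hypotheses (xbt : x \notin [set bot; top]) (ybt : y \notin [set bot; top]).

Implicit Types A B F G N : {set T}.

Local Notation I := (C :\ bot :\ top).
Local Notation O := (order_complex C lt bot top).

Let xI : x \in I. Proof. by rewrite in_interior Hx xbt. Qed.
Let yI : y \in I. Proof. by rewrite in_interior Hy ybt. Qed.
Let IC : I \subset C. Proof. exact: subsetD1D1. Qed.

Definition link_xy (F : {set T}) : Prop :=
  [/\ F \subset I, chain lt F & {in F, forall c, lt c y || lt x c}].

Lemma link_xy_old F c : link_xy F -> c \in F -> c \in C.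
Proof. by case=> /subsetP FI _ _ /FI; rewrite in_interior => /andP[]. Qed.

Lemma link_xy_notin F : link_xy F -> [/\ x \notin F, y \notin F, x' \notin F & y' \notin F].
Proof.
move=> FL; have [_ _ cmp] := FL.
split; apply/negP => /[dup] /(link_xy_old FL) HC /cmp //.
- by rewrite (negbTE (lt_irr Hx)) (negbTE nlt_x_y).
- by rewrite (negbTE (lt_irr Hy)) (negbTE nlt_x_y).
- by move: x'C; rewrite HC.
- by move: y'C; rewrite HC.
Qed.

(* An element comparable with both x and y and distinct from them lies below y
   or above x, because x covers y. *)
Lemma link_xyP F : F \in link O [set x; y] <-> link_xy F.
Proof.
split.
  case/linkP => disj /order_complexP[sub ch].
  have FI : F \subset I by apply: subset_trans sub; apply: subsetUl.
  split=> //; first by apply: chain_sub ch; apply: subsetUl.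
  move=> c Hc; have HcC : c \in C by move/subsetP: (subset_trans FI IC); apply.
  have [Ncx Ncy] : c != x /\ c != y.
    by split; apply: contraTneq Hc => ->; rewrite (disjointFl disj) // !inE eqxx ?orbT.
  have inU e : e \in [set x; y] -> e \in F :|: [set x; y] by move=> He; rewrite inE He orbT.
  have cU : c \in F :|: [set x; y] by rewrite inE Hc.
  case/or3P: (ch c y cU (inU y (set22 _ _))) => [/eqP Ecy|->//|yc].
    by rewrite Ecy eqxx in Ncy.
  case/or3P: (ch c x cU (inU x (set21 _ _))) => [/eqP Ecx|cx|->]; last by rewrite orbT.
    by rewrite Ecx eqxx in Ncx.
  by case/and4P: cov_yx => _ _ _ /forall_inP/(_ c HcC); rewrite yc cx.
move=> FL; have [FI chF cmp] := FL; have [xF yF _ _] := link_xy_notin FL.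
apply/linkP; split.
  rewrite disjoint_subset; apply/subsetP => e He; rewrite !inE.
  by apply/norP; split; apply: contraTneq He => ->.
apply/order_complexP; split; first by rewrite subUset FI subUset !sub1set xI yI.
apply: chain_setU => // [|a c Ha]; first by apply: chain_set2; rewrite lt_y_x !orbT.
have HaC := link_xy_old FL Ha.
rewrite !inE => /orP[]/eqP->; case/orP: (cmp a Ha) => [ay|xa]; rewrite ?ay ?xa ?orbT //.
  by rewrite (lt_trans HaC Hy Hx ay lt_y_x) orbT.
by rewrite (lt_trans Hy Hx HaC lt_y_x xa) !orbT.
Qed.

Lemma order_complex_old A : A \in O -> x' \notin A.
Proof.
by case/order_complexP => /subsetP AI _; apply/negP => /AI; rewrite in_interior (negbTE x'C).
Qed.

Local Notation D1 := (edge_subdivision O x y x').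

Lemma first_subdivisionP A : A \in D1 <->
  (A \in O /\ ~~ ((x \in A) && (y \in A))) \/
  exists2 F, link_xy F & [\/ A = x' |: F, A = x |: (x' |: F) | A = y |: (x' |: F)].
Proof.
have xyA : ([set x; y] \subset A) = (x \in A) && (y \in A) by rewrite subUset !sub1set.
split.
  by case/edge_subdivisionP => [|[F /link_xyP]]; rewrite ?xyA; [left | right; exists F].
case=> [HA|[F /link_xyP FL HA]]; apply/edge_subdivisionP; first by rewrite xyA; left.
by right; exists F.
Qed.

Lemma link_first_subdivisionP G : G \in link D1 [set x; x'] <-> link_xy G.
Proof.
have x_neq_x' := old_neq_x' Hx.
have xG H : x \in H :|: [set x; x'] by rewrite !inE eqxx orbT.
split; last first.
  move=> GL; have [xG' _ x'G _] := link_xy_notin GL; apply/linkP; split.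
    rewrite disjoint_subset; apply/subsetP => e He; rewrite !inE.
    by apply/norP; split; apply: contraTneq He => ->.
  by apply/first_subdivisionP; right; exists G => //; constructor 2; rewrite setUC -setUA.
case/linkP => disj /first_subdivisionP[[/order_complex_old x'N _]|[F FL]].
  by rewrite !inE eqxx !orbT in x'N.
have [xF _ x'F _] := link_xy_notin FL.
case=> E; last 1 first.
- by move: (xG G); rewrite E !inE x_neq_x' (negbTE xF) orbF eq_sym y_neq_x.
- by move: (xG G); rewrite E !inE x_neq_x' (negbTE xF).
suff -> : G = F by [].
apply/setP => e; have := congr1 (fun H : {set T} => e \in H) E; rewrite /= !inE.
have [->|Nex] := eqVneq e x; first by rewrite (disjointFl disj) ?(negbTE xF) // !inE eqxx.
have [->|Nex'] := eqVneq e x'; first by rewrite (disjointFl disj) ?(negbTE x'F) // !inE eqxx orbT.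
by rewrite !orbF.
Qed.

(* The parts of a face of O(U(P;x,y)) made of new vertices or of x, y, next
   to a face of the link of {x, y}. *)
Definition new_parts : {set {set T}} :=
  [set [set x']; [set y; x']; [set y']; [set x; y']; [set x'; y']].

(* The faces of O(P) subdivided twice, which are also those of O(U(P;x,y)). *)
Definition unzip_face (A : {set T}) : Prop :=
  (A \in O /\ ~~ ((x \in A) && (y \in A))) \/
  exists2 F, link_xy F & exists2 N, N \in new_parts & A = N :|: F.

Lemma second_subdivisionP A : A \in edge_subdivision D1 x x' y' <-> unzip_face A.
Proof.
have xx'A B : ([set x; x'] \subset B) = (x \in B) && (x' \in B) by rewrite subUset !sub1set.
have x_neq_x' := old_neq_x' Hx.
split.
  case/edge_subdivisionP => [[/first_subdivisionP HA xx'N]|[G /link_first_subdivisionP GL EA]].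
    case: HA => [HA|[F FL [EA|EA|EA]]]; [by left | right; exists F => //.. ].
    - by exists [set x']; rewrite ?EA // /new_parts !inE eqxx.
    - by move: xx'N; rewrite xx'A EA !inE !eqxx !orbT.
    - by exists [set y; x']; rewrite ?EA ?setUA // /new_parts !inE eqxx !orbT.
  right; exists G => //.
  by case: EA => ->; [exists [set y'] | exists [set x; y'] | exists [set x'; y']];
    rewrite ?setUA // /new_parts !inE eqxx !orbT.
case=> [[HA xyN]|[F FL [N NP ->]]].
  apply/edge_subdivisionP; left; rewrite xx'A (negbTE (order_complex_old HA)) andbF.
  by split=> //; apply/first_subdivisionP; left.
have [xF _ _ _] := link_xy_notin FL.
rewrite /new_parts !inE in NP.
case/orP: NP => [/orP[/orP[/orP[/eqP->|/eqP->]|/eqP->]|/eqP->]|/eqP->]; apply/edge_subdivisionP.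
- left; split; first by apply/first_subdivisionP; right; exists F => //; constructor 1.
  by rewrite xx'A !inE x_neq_x' (negbTE xF).
- left; split.
    by apply/first_subdivisionP; right; exists F => //; constructor 3; rewrite setUA.
  by rewrite xx'A !inE eq_sym y_neq_x x_neq_x' (negbTE xF).
- by right; exists F; [apply/link_first_subdivisionP | constructor 1].
- by right; exists F; [apply/link_first_subdivisionP | constructor 2; rewrite setUA].
- by right; exists F; [apply/link_first_subdivisionP | constructor 3; rewrite setUA].
Qed.

Local Notation S := [set x; y; x'; y'].

Lemma unzip_interior a : (a \in U :\ bot :\ top) = [|| a == x', a == y' | a \in I].
Proof.
rewrite !in_interior !inE; have [->|_] := eqVneq a x'; first by rewrite /=; apply/norP; split;
  apply: contraNneq x'C => ->.
have [->|_] := eqVneq a y' => //=.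
by apply/norP; split; apply: contraNneq y'C => ->.
Qed.

Lemma unzip_chain_old A : A \subset C ->
  chain unzip_rel A <-> chain lt A /\ ~~ ((x \in A) && (y \in A)).
Proof.
move=> /subsetP AC; split=> [ch|[ch xyN]].
  split; first by apply: chain_mono ch => a b Ha Hb; rewrite unzip_rel_old ?AC // => /andP[].
  apply/negP => /andP[xA yA]; case/or3P: (ch x y xA yA).
  - by rewrite eq_sym y_neq_x.
  - by rewrite unzip_rel_old // (negbTE nlt_x_y).
  - by rewrite unzip_rel_old // !eqxx andbF.
apply: chain_mono ch => a b Ha Hb ab; rewrite unzip_rel_old ?AC // ab /=.
by apply: contra xyN => /andP[/eqP<- /eqP<-]; rewrite Ha Hb.
Qed.

Lemma link_xy_cmp F c v : link_xy F -> c \in F -> v \in S ->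
  [|| v == c, unzip_rel v c | unzip_rel c v].
Proof.
move=> FL cF; have [_ _ cmp] := FL; have Hc := link_xy_old FL cF.
have [xF yF _ _] := link_xy_notin FL.
have [Ncx Ncy] : (c == x) = false /\ (c == y) = false.
  by split; apply/negbTE; apply: contraTneq cF => ->.
rewrite !inE => /orP[/orP[/orP[/eqP->|/eqP->]|/eqP->]|/eqP->].
- rewrite !unzip_rel_old // Ncy eq_sym Ncx andbF andbT /= andbT.
  by case/orP: (cmp c cF) => [cy|->]; rewrite ?(lt_trans Hc Hy Hx cy lt_y_x) ?orbT.
- rewrite !unzip_rel_old // Ncy Ncx !andbF !andbT /=.
  by case/orP: (cmp c cF) => [->|xc]; rewrite ?(lt_trans Hy Hx Hc lt_y_x xc) ?orbT.
- by rewrite unzip_rel_x'_old // unzip_rel_old_x' //; case/orP: (cmp c cF) => ->; rewrite !orbT.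
- by rewrite unzip_rel_y'_old // unzip_rel_old_y' //; case/orP: (cmp c cF) => ->; rewrite !orbT.
Qed.

(* Faces of the link avoid y, so they keep all their comparisons in U(P;x,y). *)
Lemma link_xy_chain F : link_xy F -> chain unzip_rel F.
Proof.
move=> FL; have [_ chF _] := FL; have [_ yF _ _] := link_xy_notin FL.
apply/unzip_chain_old; last by rewrite (negbTE yF) andbF.
by apply/subsetP => c; apply: link_xy_old.
Qed.

Lemma new_partsP N : N \in new_parts -> N \subset S /\ chain unzip_rel N.
Proof.
have [_ _ Ry'x' _] := unzip_rel_new.
rewrite /new_parts !inE.
case/orP => [/orP[/orP[/orP[/eqP->|/eqP->]|/eqP->]|/eqP->]|/eqP->];
  rewrite ?subUset !sub1set !inE !eqxx ?orbT;
  split=> //; try exact: chain_set1; apply: chain_set2.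
- by rewrite unzip_rel_old_x' ?eqxx ?orbT.
- by rewrite unzip_rel_y'_old ?eqxx ?orbT.
- by rewrite Ry'x' !orbT.
Qed.

(* A chain of U(P;x,y) through x' or y' meets {x, y, x', y'} in a new part:
   x' is incomparable with x, y' with y, and x with y. *)
Lemma unzip_chain_new_part A : chain unzip_rel A -> (x' \in A) || (y' \in A) ->
  A :&: S \in new_parts.
Proof.
move=> ch new; have [Rx'x' Rx'y' Ry'x' Ry'y'] := unzip_rel_new.
have incomparable a b : a \in A -> b \in A ->
    [|| a == b, unzip_rel a b | unzip_rel b a] = false -> False.
  by move=> Ha Hb; rewrite ch.
have x'xN : x' \in A -> x \notin A.
  move=> x'A; apply/negP => xA; apply: (incomparable _ _ x'A xA).
  rewrite unzip_rel_x'_old // unzip_rel_old_x' // (negbTE (lt_irr Hx)).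
  by rewrite x'_neq_old // x_neq_y (negbTE nlt_x_y).
have y'yN : y' \in A -> y \notin A.
  move=> y'A; apply/negP => yA; apply: (incomparable _ _ y'A yA).
  rewrite unzip_rel_y'_old // unzip_rel_old_y' // (negbTE (lt_irr Hy)).
  by rewrite y'_neq_old // y_neq_x (negbTE nlt_x_y).
have xyN : ~~ ((x \in A) && (y \in A)).
  apply/negP => /andP[xA yA]; apply: (incomparable _ _ xA yA).
  by rewrite !unzip_rel_old // x_neq_y (negbTE nlt_x_y) !eqxx andbF.
have trace N : N \in new_parts -> (x \in A) = (x \in N) -> (y \in A) = (y \in N) ->
    (x' \in A) = (x' \in N) -> (y' \in A) = (y' \in N) -> A :&: S \in new_parts.
  move=> NP Nx Ny Nx' Ny'; rewrite (@setI_by_members _ _ N) //; first by case: (new_partsP NP).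
  by move=> e; rewrite !inE => /orP[/orP[/orP[]|]|]/eqP->.
have neqs := (x_neq_y, y_neq_x, old_neq_x' Hx, old_neq_x' Hy, old_neq_y' Hx, old_neq_y' Hy,
  x'_neq_old Hx, x'_neq_old Hy, y'_neq_old Hx, y'_neq_old Hy, y'_neq_x', negbTE x'_neq_y').
have [x'A|x'N] := boolP (x' \in A); have [y'A|y'N] := boolP (y' \in A).
- apply: (trace [set x'; y']); rewrite /new_parts !inE ?eqxx ?neqs ?orbT //.
  + by rewrite (negbTE (x'xN x'A)).
  + by rewrite (negbTE (y'yN y'A)).
- have [yA|yN] := boolP (y \in A); [apply: (trace [set y; x']) | apply: (trace [set x'])];
    by rewrite /new_parts !inE ?eqxx ?neqs ?orbT ?x'A ?yA ?(negbTE yN)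
      ?(negbTE (x'xN x'A)) ?(negbTE y'N).
- have [xA|xN] := boolP (x \in A); [apply: (trace [set x; y']) | apply: (trace [set y'])];
    by rewrite /new_parts !inE ?eqxx ?neqs ?orbT ?y'A ?xA ?(negbTE xN)
      ?(negbTE (y'yN y'A)) ?(negbTE x'N).
- by rewrite (negbTE x'N) (negbTE y'N) in new.
Qed.

Lemma unzip_interior_old B : B \subset I -> B \subset U :\ bot :\ top.
Proof. by move=> /subsetP BI; apply/subsetP => e /BI eI; rewrite unzip_interior eI !orbT. Qed.

(* A face of O(U(P;x,y)) is a face of the twice subdivided O(P): either it
   avoids x', y', or its elements outside {x, y, x', y'} form a face of the link
   of {x, y}, being comparable with x' or y'. *)
Lemma unzip_chain_face A :
  A \subset U :\ bot :\ top -> chain unzip_rel A -> unzip_face A.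
Proof.
move=> sub ch.
have inA a : a \in A -> [|| a == x', a == y' | a \in I].
  by move/(subsetP sub); rewrite unzip_interior.
have [new|old] := boolP ((x' \in A) || (y' \in A)); last first.
  have AI : A \subset I.
    apply/subsetP => a /[dup] Ha /inA /or3P[/eqP Ea|/eqP Ea|//];
      by rewrite -Ea Ha ?orbT in old.
  have [chA xyN] := (unzip_chain_old (subset_trans AI IC)).1 ch.
  by left; split=> //; apply/order_complexP.
right; exists (A :\: S); last by exists (A :&: S); [apply: unzip_chain_new_part | rewrite setID].
have FI : A :\: S \subset I.
  apply/subsetP => a; rewrite inE => /andP[aNS /inA]; rewrite !inE in aNS.
  by case/or3P => [/eqP Ea|/eqP Ea|//]; rewrite Ea eqxx !orbT in aNS.
have chF : chain unzip_rel (A :\: S) by apply: chain_sub ch; apply: subsetDl.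
split=> //; first by have [] := (unzip_chain_old (subset_trans FI IC)).1 chF.
move=> c cF; have Hc : c \in C by move/subsetP: (subset_trans FI IC); apply.
move: cF; rewrite !inE !negb_or => /andP[/andP[/andP[/andP[Ncx Ncy] Ncx'] Ncy'] cA].
case/orP: new => [x'A|y'A].
  move: (ch c x' cA x'A).
  by rewrite unzip_rel_old_x' // unzip_rel_x'_old // (negbTE Ncx') (negbTE Ncy).
move: (ch c y' cA y'A).
by rewrite unzip_rel_old_y' // unzip_rel_y'_old // (negbTE Ncy') (negbTE Ncx).
Qed.

Lemma unzip_face_chain A :
  unzip_face A -> A \subset U :\ bot :\ top /\ chain unzip_rel A.
Proof.
case=> [[/order_complexP[AI chA] xyN]|[F FL [N NP ->]]].
  split; first exact: unzip_interior_old.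
  by apply/unzip_chain_old; first exact: subset_trans AI IC.
have [NS chN] := new_partsP NP; have [FI _ _] := FL.
split.
  rewrite subUset (unzip_interior_old FI) andbT; apply: subset_trans NS _.
  apply/subsetP => e eS; rewrite unzip_interior; rewrite !inE in eS.
  by case/orP: eS => [/orP[/orP[]|]|]/eqP->; rewrite ?xI ?yI ?eqxx ?orbT.
apply: chain_setU => // [|n c nN cF]; first exact: link_xy_chain.
exact: link_xy_cmp FL cF (subsetP NS n nN).
Qed.

Lemma unzip_order_complex :
  order_complex U unzip_rel bot top = edge_subdivision D1 x x' y'.
Proof.
apply/setP => A; apply/idP/idP => [/order_complexP[sub ch]|/second_subdivisionP face].
  exact/second_subdivisionP/unzip_chain_face.
by apply/order_complexP; apply: unzip_face_chain.
Qed.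

End UnzipComplex.

End Unzipping.

Theorem proposition2p4 (T : finType) (C : {set T}) (lt : rel T)
    (bot top : T) (r : T -> nat) :
  graded_poset C lt bot top r ->
  (* (1) *)
  (forall x y x' y' : T,
     x \in C -> y \in C -> x \notin [set bot; top] -> y \notin [set bot; top] ->
     covers C lt y x ->
     x' \notin C -> y' \notin C -> x' != y' ->
     zippable (unzip_carrier C x' y') (unzip_lt C lt x y x' y') bot top x' y' y /\
     same_poset (zip_carrier (unzip_carrier C x' y') x' y')
                (zip_lt (unzip_carrier C x' y') (unzip_lt C lt x y x' y') x' y' y)
                C lt) /\
  (* (2) *)
  (forall x y z : T,
     zippable C lt bot top x y z ->
     order_complex (zip_carrier C x y) (zip_lt C lt x y z) bot top =
     edge_contraction (edge_contraction (order_complex C lt bot top) y x) x z) /\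
  (* (3) *)
  (forall x y x' y' : T,
     x \in C -> y \in C -> x \notin [set bot; top] -> y \notin [set bot; top] ->
     covers C lt y x ->
     x' \notin C -> y' \notin C -> x' != y' ->
     order_complex (unzip_carrier C x' y') (unzip_lt C lt x y x' y') bot top =
     edge_subdivision (edge_subdivision (order_complex C lt bot top) x y x') x x' y').
Proof.
case=> lt_irr lt_trans [Hbot Htop] _ _; split; [|split].
- move=> x y x' y' Hx Hy _ ybt cyx x'C y'C x'_neq_y'.
  rewrite (unzip_lt_eq lt_irr lt_trans Hx Hy cyx x'C y'C x'_neq_y').
  split; first exact: unzip_zippable.
  exact: (zip_after_unzip lt_irr lt_trans Hx Hy cyx x'C y'C x'_neq_y' Hbot Htop ybt).
- by move=> x y z; apply: zip_order_complex.
- move=> x y x' y' Hx Hy xbt ybt cyx x'C y'C x'_neq_y'.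
  rewrite (unzip_lt_eq lt_irr lt_trans Hx Hy cyx x'C y'C x'_neq_y').
  exact: unzip_order_complex.
Qed.
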